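(* Let $N$ be a continuous fuzzy negation, $U$ a disjunctive uninorm with neutral element $e\in\,]0,1[$, and $I(x,y)=U(N(x),y)$ for $x,y\in[0,1]$. Then the representation of $I$ as a $(U,N)$-implication with a continuous fuzzy negation is not unique if and only if there exists $\alpha\in\,]0,1[$ with $\alpha\neq e$ such that the function $f=U(\cdot,\alpha)$ is continuous and non-decreasing with $f(0)=0$ and $f(1)=1$.
   Context: A fuzzy negation is a non-increasing map $N:[0,1]\to[0,1]$ with $N(0)=1$, $N(1)=0$. A uninorm is a map $U:[0,1]^2\to[0,1]$ that is commutative, associative, non-decreasing in each variable, and has a neutral element $e\in[0,1]$. A uninorm is disjunctive if $U(1,0)=1$. A representation of $I$ as a $(U,N)$-implication with a continuous fuzzy negation is a pair $(U',N')$ with $U'$ a disjunctive uninorm with neutral element in $]0,1[$ and $N'$ a continuous fuzzy negation such that $I(x,y)=U'(N'(x),y)$ for all $x,y\in[0,1]$; the representation is unique if $(U,N)$ is the only such pair. *)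

(* concrete reals R; all maps are total R -> R (or R -> R -> R)
   and only their behaviour on [0,1] matters. *)
From Stdlib Require Import Reals.
Open Scope R_scope.

Definition in01 (x : R) : Prop := 0 <= x <= 1.

Definition cont01 (f : R -> R) : Prop :=
  forall x, in01 x -> forall eps, 0 < eps ->
    exists delta, 0 < delta /\
      forall y, in01 y -> Rabs (y - x) < delta -> Rabs (f y - f x) < eps.

Definition nondecr01 (f : R -> R) : Prop :=
  forall x y, in01 x -> in01 y -> x <= y -> f x <= f y.

Definition fuzzy_negation (N : R -> R) : Prop :=
  (forall x, in01 x -> in01 (N x)) /\
  (forall x y, in01 x -> in01 y -> x <= y -> N y <= N x) /\
  N 0 = 1 /\ N 1 = 0.

Definition uninorm (U : R -> R -> R) (e : R) : Prop :=
  in01 e /\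
  (forall x y, in01 x -> in01 y -> in01 (U x y)) /\
  (forall x y, in01 x -> in01 y -> U x y = U y x) /\
  (forall x y z, in01 x -> in01 y -> in01 z -> U x (U y z) = U (U x y) z) /\
  (forall x1 x2 y, in01 x1 -> in01 x2 -> in01 y -> x1 <= x2 -> U x1 y <= U x2 y) /\
  (forall x1 x2 y, in01 x1 -> in01 x2 -> in01 y -> x1 <= x2 -> U y x1 <= U y x2) /\
  (forall x, in01 x -> U e x = x).

Definition disjunctive (U : R -> R -> R) : Prop := U 1 0 = 1.

Definition UN_representation (I U' : R -> R -> R) (N' : R -> R) : Prop :=
  (exists e', 0 < e' < 1 /\ uninorm U' e') /\ disjunctive U' /\
  fuzzy_negation N' /\ cont01 N' /\
  (forall x y, in01 x -> in01 y -> I x y = U' (N' x) y).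

Definition unique_UN_representation (I U : R -> R -> R) (N : R -> R) : Prop :=
  UN_representation I U N /\
  forall U' N', UN_representation I U' N' ->
    (forall x y, in01 x -> in01 y -> U' x y = U x y) /\
    (forall x, in01 x -> N' x = N x).

(* If (U', N') is another representation, with neutral element e', then
   U(N x, e') = N' x.  For e' = e this forces (U', N') = (U, N), because N
   is onto [0,1]; otherwise f = U(., e') is non-decreasing with f 0 = 0 and
   f 1 = 1, and it is onto [0,1] (as f o N = N' is), hence continuous.
   Conversely, given such an alpha, pick b with U(alpha, b) = e; then
   U'(x, y) = U(U(x, y), b) is a disjunctive uninorm with neutral element
   alpha, and (U', U(N ., alpha)) represents I although U'(alpha, e) = e
   differs from U(alpha, e) = alpha. *)

From Stdlib Require Import Reals Lra Classical.
Open Scope R_scope.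

Lemma in01_0 : in01 0.
Proof. unfold in01; lra. Qed.

Lemma in01_1 : in01 1.
Proof. unfold in01; lra. Qed.

#[local] Hint Resolve in01_0 in01_1 : core.

Definition clamp01 (x : R) : R := Rmax 0 (Rmin 1 x).

Lemma clamp01_in01 (x : R) : in01 (clamp01 x).
Proof. unfold clamp01, in01, Rmax, Rmin; repeat destruct Rle_dec; lra. Qed.

Lemma clamp01_id (x : R) : in01 x -> clamp01 x = x.
Proof. unfold clamp01, in01, Rmax, Rmin; intros; repeat destruct Rle_dec; lra. Qed.

Lemma clamp01_1lipschitz (x y : R) : Rabs (clamp01 y - clamp01 x) <= Rabs (y - x).
Proof.
  unfold clamp01, Rmax, Rmin, Rabs.
  repeat destruct Rle_dec; repeat destruct Rcase_abs; lra.
Qed.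

(* Extending g by constants outside [0,1] gives a continuous map on R, to which
   the Stdlib intermediate value theorem applies. *)
Lemma cont01_IVT (g : R -> R) (t : R) :
  cont01 g -> (g 0 - t) * (g 1 - t) <= 0 -> exists x, in01 x /\ g x = t.
Proof.
  intros Hg Hsign.
  set (G := fun y => g (clamp01 y) - t).
  assert (HG : continuity G).
  { intros x eps Heps.
    destruct (Hg _ (clamp01_in01 x) eps Heps) as [d [Hd Hclose]].
    exists d; split; [lra|]; intros y [_ Hy]; simpl in *; unfold Rdist in *.
    unfold G; replace (g (clamp01 y) - t - (g (clamp01 x) - t))
      with (g (clamp01 y) - g (clamp01 x)) by ring.
    apply Hclose; [apply clamp01_in01|].
    eapply Rle_lt_trans; [apply clamp01_1lipschitz | exact Hy]. }
  destruct (IVT_cor G 0 1 HG) as [z [Hz HGz]]; [lra| |].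
  - unfold G; rewrite !clamp01_id; auto.
  - exists z; assert (Hz01 : in01 z) by (unfold in01; lra).
    split; [exact Hz01|]; unfold G in HGz; rewrite clamp01_id in HGz; auto; lra.
Qed.

Lemma cont_fuzzy_negation_onto (N : R -> R) :
  fuzzy_negation N -> cont01 N -> forall t, in01 t -> exists x, in01 x /\ N x = t.
Proof.
  intros [_ [_ [N0 N1]]] HNc t Ht; apply cont01_IVT; [exact HNc|].
  rewrite N0, N1; unfold in01 in Ht; nra.
Qed.

Lemma cont01_comp (f g : R -> R) :
  cont01 g -> cont01 f -> (forall x, in01 x -> in01 (g x)) -> cont01 (fun x => f (g x)).
Proof.
  intros Hg Hf Hrange x Hx eps Heps.
  destruct (Hf (g x) (Hrange x Hx) eps Heps) as [d1 [Hd1 Hf1]].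
  destruct (Hg x Hx d1 Hd1) as [d2 [Hd2 Hg2]].
  exists d2; split; [exact Hd2|]; intros y Hy Hyx; apply Hf1; auto.
Qed.

Section MonotoneOnto.

Variable f : R -> R.
Hypothesis f_nondecr : nondecr01 f.
Hypothesis f_range : forall x, in01 x -> in01 (f x).
Hypothesis f_onto : forall t, in01 t -> exists x, in01 x /\ f x = t.

(* A jump of f at x would leave a value near f x out of the range. *)
Lemma nondecr_onto_right_cont (x eps : R) : in01 x -> 0 < eps ->
  exists d, 0 < d /\ forall y, in01 y -> x <= y -> y < x + d -> f y - f x < eps.
Proof.
  intros Hx Heps; pose proof (f_range x Hx) as Hfx; unfold in01 in Hfx.
  destruct (Rlt_dec (f x) 1) as [Hlt|Hge].
  - destruct (f_onto (Rmin (f x + eps / 2) 1)) as [x2 [Hx2 Hfx2]].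
    { unfold in01, Rmin; destruct Rle_dec; lra. }
    assert (Hmin : Rmin (f x + eps / 2) 1 <= f x + eps / 2) by apply Rmin_l.
    assert (Hxx2 : x < x2).
    { destruct (Rlt_dec x x2) as [h|h]; [exact h|].
      assert (f x2 <= f x) by (apply f_nondecr; auto; lra).
      unfold Rmin in Hfx2; destruct Rle_dec; lra. }
    exists (x2 - x); split; [lra|]; intros y Hy Hxy Hyx2.
    assert (f y <= f x2) by (apply f_nondecr; auto; lra); lra.
  - exists 1; split; [lra|]; intros y Hy _ _.
    pose proof (f_range y Hy); unfold in01 in *; lra.
Qed.

Lemma nondecr_onto_left_cont (x eps : R) : in01 x -> 0 < eps ->
  exists d, 0 < d /\ forall y, in01 y -> y <= x -> x - d < y -> f x - f y < eps.
Proof.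
  intros Hx Heps; pose proof (f_range x Hx) as Hfx; unfold in01 in Hfx.
  destruct (Rlt_dec 0 (f x)) as [Hlt|Hge].
  - destruct (f_onto (Rmax (f x - eps / 2) 0)) as [x1 [Hx1 Hfx1]].
    { unfold in01, Rmax; destruct Rle_dec; lra. }
    assert (Hmax : f x - eps / 2 <= Rmax (f x - eps / 2) 0) by apply Rmax_l.
    assert (Hx1x : x1 < x).
    { destruct (Rlt_dec x1 x) as [h|h]; [exact h|].
      assert (f x <= f x1) by (apply f_nondecr; auto; lra).
      unfold Rmax in Hfx1; destruct Rle_dec; lra. }
    exists (x - x1); split; [lra|]; intros y Hy Hyx Hx1y.
    assert (f x1 <= f y) by (apply f_nondecr; auto; lra); lra.
  - exists 1; split; [lra|]; intros y Hy _ _.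
    pose proof (f_range y Hy); unfold in01 in *; lra.
Qed.

Lemma nondecr_onto_cont01 : cont01 f.
Proof.
  intros x Hx eps Heps.
  destruct (nondecr_onto_right_cont x eps Hx Heps) as [dr [Hdr Hright]].
  destruct (nondecr_onto_left_cont x eps Hx Heps) as [dl [Hdl Hleft]].
  exists (Rmin dr dl); split; [apply Rmin_pos; auto|]; intros y Hy Hyx.
  assert (Rmin dr dl <= dr) by apply Rmin_l.
  assert (Rmin dr dl <= dl) by apply Rmin_r.
  apply Rabs_def2 in Hyx as [Hyx1 Hyx2].
  destruct (Rle_dec x y) as [Hxy|Hxy].
  - assert (f x <= f y) by (apply f_nondecr; auto).
    assert (f y - f x < eps) by (apply Hright; auto; lra).
    apply Rabs_def1; lra.
  - assert (f y <= f x) by (apply f_nondecr; auto; lra).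
    assert (f x - f y < eps) by (apply Hleft; auto; lra).
    apply Rabs_def1; lra.
Qed.

End MonotoneOnto.

Section Uninorm.

Variables (U : R -> R -> R) (e : R).
Hypothesis HU : uninorm U e.

Lemma uninorm_in01 : in01 e.
Proof. apply HU. Qed.

Lemma uninorm_closed x y : in01 x -> in01 y -> in01 (U x y).
Proof. apply HU. Qed.

Lemma uninorm_comm x y : in01 x -> in01 y -> U x y = U y x.
Proof. apply HU. Qed.

Lemma uninorm_assoc x y z : in01 x -> in01 y -> in01 z -> U x (U y z) = U (U x y) z.
Proof. apply HU. Qed.

Lemma uninorm_monoL x1 x2 y : in01 x1 -> in01 x2 -> in01 y -> x1 <= x2 -> U x1 y <= U x2 y.
Proof. apply HU. Qed.

Lemma uninorm_monoR x1 x2 y : in01 x1 -> in01 x2 -> in01 y -> x1 <= x2 -> U y x1 <= U y x2.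
Proof. apply HU. Qed.

Lemma uninorm_neutralL x : in01 x -> U e x = x.
Proof. apply HU. Qed.

Lemma uninorm_neutralR x : in01 x -> U x e = x.
Proof.
  intros Hx; rewrite uninorm_comm; [apply uninorm_neutralL|..]; auto using uninorm_in01.
Qed.

#[local] Hint Resolve uninorm_in01 uninorm_closed : core.

Lemma disjunctive_top_absorbing y : disjunctive U -> in01 y -> U 1 y = 1.
Proof.
  intros HD Hy; pose proof (uninorm_closed 1 y in01_1 Hy).
  assert (U 1 0 <= U 1 y) by (apply uninorm_monoR; auto; apply Hy).
  unfold disjunctive, in01 in *; lra.
Qed.

Section Shift.

Variables a b : R.
Hypotheses (Ha : in01 a) (Hb : in01 b) (Hab : U a b = e).

Definition uninorm_shift (x y : R) : R := U (U x y) b.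

Lemma uninorm_shift_uninorm : uninorm uninorm_shift a.
Proof.
  unfold uninorm_shift.
  split; [exact Ha|]; split; [auto|]; split; [|split; [|split; [|split]]].
  - intros x y Hx Hy; rewrite (uninorm_comm x y); auto.
  - intros x y z Hx Hy Hz.
    rewrite (uninorm_assoc x (U y z) b), (uninorm_assoc x y z),
      <- (uninorm_assoc (U x y) b z), (uninorm_comm b z),
      (uninorm_assoc (U x y) z b); auto.
  - intros x1 x2 y H1 H2 Hy H12; apply uninorm_monoL; auto; apply uninorm_monoL; auto.
  - intros x1 x2 y H1 H2 Hy H12; apply uninorm_monoL; auto; apply uninorm_monoR; auto.
  - intros x Hx; rewrite (uninorm_comm a x), <- uninorm_assoc, Hab, uninorm_neutralR; auto.
Qed.

Lemma uninorm_shift_disjunctive : disjunctive U -> disjunctive uninorm_shift.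
Proof.
  intros HD; unfold disjunctive, uninorm_shift; rewrite HD.
  apply disjunctive_top_absorbing; auto.
Qed.

Lemma uninorm_shift_implication (N : R -> R) x y :
  in01 (N x) -> in01 y -> U (N x) y = uninorm_shift (U (N x) a) y.
Proof.
  intros Hx Hy; unfold uninorm_shift.
  rewrite <- (uninorm_assoc (N x) a y), (uninorm_comm a y), (uninorm_assoc (N x) y a),
    <- (uninorm_assoc (U (N x) y) a b), Hab, uninorm_neutralR; auto.
Qed.

End Shift.

End Uninorm.

#[local] Hint Resolve uninorm_in01 uninorm_closed : core.

Section Representations.

Variables (N : R -> R) (U I : R -> R -> R) (e : R).
Hypotheses (HN : fuzzy_negation N) (HNc : cont01 N) (HU : uninorm U e)
  (HI : forall x y, in01 x -> in01 y -> I x y = U (N x) y).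

Lemma negation_in01 x : in01 x -> in01 (N x).
Proof. apply HN. Qed.

#[local] Hint Resolve negation_in01 : core.

Lemma representation_neutral_section U' N' e' :
  uninorm U' e' -> fuzzy_negation N' ->
  (forall x y, in01 x -> in01 y -> I x y = U' (N' x) y) ->
  forall x, in01 x -> U (N x) e' = N' x.
Proof.
  intros HU' [HN'01 _] HI' x Hx.
  rewrite <- HI, HI', uninorm_neutralR; eauto.
Qed.

Lemma representation_same_neutral U' N' :
  uninorm U' e -> fuzzy_negation N' ->
  (forall x y, in01 x -> in01 y -> I x y = U' (N' x) y) ->
  (forall x y, in01 x -> in01 y -> U' x y = U x y) /\ (forall x, in01 x -> N' x = N x).
Proof.
  intros HU' HN' HI'.
  assert (HNN : forall x, in01 x -> N' x = N x).
  { intros x Hx; rewrite <- (representation_neutral_section U' N' e), uninorm_neutralR; eauto. }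
  split; [|exact HNN].
  intros a y Ha Hy; destruct (cont_fuzzy_negation_onto N HN HNc a Ha) as [x [Hx <-]].
  rewrite <- (HNN x Hx) at 1; rewrite <- HI', HI; auto.
Qed.

Lemma representation_other_neutral U' N' e' :
  uninorm U' e' -> fuzzy_negation N' -> cont01 N' ->
  (forall x y, in01 x -> in01 y -> I x y = U' (N' x) y) ->
  cont01 (fun x => U x e') /\ nondecr01 (fun x => U x e') /\ U 0 e' = 0 /\ U 1 e' = 1.
Proof.
  intros HU' HN' HN'c HI'.
  pose proof (uninorm_in01 _ _ HU') as He'.
  pose proof (representation_neutral_section U' N' e' HU' HN' HI') as Hsection.
  assert (N0 : N 0 = 1) by apply HN; assert (N1 : N 1 = 0) by apply HN.
  assert (Hmono : nondecr01 (fun x => U x e')).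
  { intros x y Hx Hy Hxy; apply uninorm_monoL with e; auto. }
  split; [|split; [exact Hmono|split]].
  - apply nondecr_onto_cont01; [exact Hmono | intros x Hx; eauto |].
    intros t Ht; destruct (cont_fuzzy_negation_onto N' HN' HN'c t Ht) as [x [Hx <-]].
    exists (N x); split; auto.
  - rewrite <- N1 at 1; rewrite Hsection; auto; apply HN'.
  - rewrite <- N0 at 1; rewrite Hsection; auto; apply HN'.
Qed.

Lemma shifted_representation alpha b :
  disjunctive U -> 0 < alpha < 1 -> in01 b -> U alpha b = e ->
  U 0 alpha = 0 -> cont01 (fun x => U x alpha) ->
  UN_representation I (uninorm_shift U b) (fun x => U (N x) alpha).
Proof.
  intros HD Halpha Hb Hab H0 Hcont.
  assert (Halpha01 : in01 alpha) by (unfold in01; lra).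
  pose proof HN as [_ [HNmono [N0 N1]]].
  split; [|split; [|split; [|split]]].
  - exists alpha; split; [exact Halpha|]; apply (uninorm_shift_uninorm U e HU); auto.
  - apply (uninorm_shift_disjunctive U e HU); auto.
  - split; [intros x Hx; eauto|]; split; [|split].
    + intros x y Hx Hy Hxy; apply uninorm_monoL with e; auto.
    + rewrite N0; apply disjunctive_top_absorbing with e; auto.
    + rewrite N1; exact H0.
  - apply (cont01_comp (fun t => U t alpha) N); auto.
  - intros x y Hx Hy; rewrite HI, (uninorm_shift_implication U e HU alpha b); auto.
Qed.

End Representations.

Theorem mainTheorem4 (N : R -> R) (U : R -> R -> R) (e : R) (I : R -> R -> R) :
  fuzzy_negation N -> cont01 N ->
  uninorm U e -> 0 < e < 1 -> disjunctive U ->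
  (forall x y, in01 x -> in01 y -> I x y = U (N x) y) ->
  (~ unique_UN_representation I U N <->
   exists alpha, 0 < alpha < 1 /\ alpha <> e /\
     cont01 (fun x => U x alpha) /\ nondecr01 (fun x => U x alpha) /\
     U 0 alpha = 0 /\ U 1 alpha = 1).
Proof.
  intros HN HNc HU He HD HI; split.
  - intros Hnot; apply NNPP; intros Hnone; apply Hnot; split.
    { split; [exists e; split; auto|]; split; [exact HD|]; split; [exact HN|]; split; auto. }
    intros U' N' [[e' [He' HU']] [_ [HN' [HN'c HI']]]].
    destruct (Req_dec e' e) as [-> | Hne].
    + apply (representation_same_neutral N U I e); auto.
    + exfalso; apply Hnone; exists e'; split; [exact He'|]; split; [exact Hne|].
      eapply (representation_other_neutral N U I e); eauto.
  - intros [alpha [Halpha [Hne [Hcont [_ [H0 H1]]]]]] [_ Hunique].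
    assert (Halpha01 : in01 alpha) by (unfold in01; lra).
    destruct (cont01_IVT (fun x => U x alpha) e Hcont) as [b [Hb Hba]].
    { rewrite H0, H1; nra. }
    assert (Hab : U alpha b = e) by (cbn in Hba; rewrite (uninorm_comm U e HU); auto).
    destruct (Hunique _ _ (shifted_representation N U I e HN HNc HU HI alpha b
                             HD Halpha Hb Hab H0 Hcont)) as [HU'eq _].
    specialize (HU'eq alpha e Halpha01 (uninorm_in01 _ _ HU)).
    unfold uninorm_shift in HU'eq.
    rewrite !(uninorm_neutralR U e HU alpha Halpha01), Hab in HU'eq.
    exact (Hne (eq_sym HU'eq)).
Qed.
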